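(* Let $k\geq1$ and let $I_1,\ldots,I_n$ be a partition of $\{1,\ldots,k\}$. Let $a=(a_1,\ldots,a_k)\in\mathbb{R}^k$ and define $b=(b_1,\ldots,b_n)\in\mathbb{R}^n$ by $b_i=\sum_{j\in I_i}a_j$. If $a\in\Delta_k$ then $b\in\Delta_n$.
   Context: For $m\geq1$, $\Delta_m$ is the set of $(a_1,\ldots,a_m)\in[0,1]^m$ with $\sum_{j=1}^ma_j\leq1$ and $a_i+\sum_{j=1}^ma_j\geq1$ for every $i\in\{1,\ldots,m\}$. *)

From mathcomp Require Import all_boot all_order all_algebra.
Set Implicit Arguments. Unset Strict Implicit. Unset Printing Implicit Defensive.
Import Order.TTheory GRing.Theory Num.Theory.
Local Open Scope ring_scope.

Definition Delta (R : realFieldType) (m : nat) (a : 'I_m -> R) : Prop :=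
  (forall i, 0 <= a i <= 1) /\
  \sum_(j < m) a j <= 1 /\
  (forall i, 1 <= a i + \sum_(j < m) a j).

Definition is_indexed_partition (k n : nat) (I : 'I_n -> {set 'I_k}) : Prop :=
  (forall i, I i != set0) /\
  (forall i i', i != i' -> [disjoint I i & I i']) /\
  (forall j : 'I_k, exists i, j \in I i).

From mathcomp Require Import all_boot all_order all_algebra.
Import Order.TTheory GRing.Theory Num.Theory.
Set Implicit Arguments.
Unset Strict Implicit.
Local Open Scope ring_scope.

(* As the blocks partition the indices, sum b = sum a.  Each b_i is a sum of
   nonnegative a_j, so 0 <= b_i <= sum a <= 1; and the nonempty block I_i
   contains some j, with a_j <= b_i, so 1 <= a_j + sum a <= b_i + sum b. *)

Lemma sum_over_blocks (V : nmodType) (J T : finType) (I : J -> {set T})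
    (F : T -> V) :
  (forall i i', i != i' -> [disjoint I i & I i']) ->
  (forall x, exists i, x \in I i) ->
  \sum_i \sum_(x in I i) F x = \sum_x F x.
Proof.
move=> disjI coverI; rewrite (exchange_big_dep predT) //=.
apply: eq_bigr => x _; have [i0 xIi0] := coverI x.
rewrite (big_pred1 i0) // => i /=; apply/idP/eqP => [xIi | -> //].
by apply: contraTeq xIi => /disjI/disjointFl->.
Qed.

Lemma ler_sum_subset (R : numDomainType) (T : finType) (A B : {set T})
    (F : T -> R) :
  A \subset B -> {in B, forall x, 0 <= F x} ->
  \sum_(x in A) F x <= \sum_(x in B) F x.
Proof.
move=> AB F_ge0; rewrite [leRHS](big_setID A) /= (setIidPr AB) lerDl.
by apply: sumr_ge0 => x /setDP[xB _]; exact: F_ge0.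
Qed.

Theorem lemma1p3 (R : realFieldType) (k n : nat) (hk : (1 <= k)%N)
  (I : 'I_n -> {set 'I_k}) (hI : is_indexed_partition I)
  (a : 'I_k -> R) :
  Delta a -> Delta (fun i : 'I_n => \sum_(j in I i) a j).
Proof.
case: hI => [I_neq0 [disjI coverI]] [a01 [sum_a_le1 a_sum_ge1]].
have a_ge0 j : 0 <= a j by case/andP: (a01 j).
have b_ge0 i : 0 <= \sum_(j in I i) a j by exact: sumr_ge0.
have sum_b := sum_over_blocks a disjI coverI.
split; [|split]; rewrite ?sum_b //.
- move=> i; rewrite b_ge0 /=; apply: le_trans sum_a_le1.
  have := ler_sum_subset (F := a) (subsetT (I i)).
  by rewrite big_set; apply=> j _; exact: a_ge0.
- move=> i; have /set0Pn[j jIi] := I_neq0 i.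
  apply: le_trans (a_sum_ge1 j) _; rewrite lerD2r.
  have := ler_sum_subset (F := a) (A := [set j]) (B := I i).
  by rewrite big_set1 sub1set; apply=> // l _; exact: a_ge0.
Qed.
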